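(* Assume the standing assumptions (A1)–(A4) and let $r>0$ be a constant such that $\|u\|^2+\|w\|^2\le r$ for every $u\in\mathcal U$ and every extreme point $w$ of $\mathcal W$. Then the optimal value of \[ (\overline{RLP})\quad \min_{x,\lambda,\Lambda,\rho}\ c^Tx+\lambda+r\rho\ \ \text{s.t.}\ \ x\in\mathcal X,\ \ \lambda g_1g_1^T-\tfrac12G(x)+\tfrac12(E^T\Lambda^T+\Lambda E)+\rho I\in\mathrm{COP}(\widehat{\mathcal U}\times\mathbb R^m_+),\ \ \rho\ge0, \] with $\lambda,\rho\in\mathbb R$, $\Lambda\in\mathbb R^{(k+m)\times n_2}$, equals $v^*_{RLP}$.
   Context: Data: $A\in\mathbb R^{m\times n_1}$, $B\in\mathbb R^{m\times n_2}$, $c\in\mathbb R^{n_1}$, $d\in\mathbb R^{n_2}$, $F\in\mathbb R^{m\times k}$, $\mathcal X\subseteq\mathbb R^{n_1}$ closed convex. $\widehat{\mathcal U}\subseteq\mathbb R_+\times\mathbb R^{k-1}$ is a closed, convex, full-dimensional cone and $\mathcal U:=\{u\in\widehat{\mathcal U}: u_1=1\}$, assumed nonempty and compact. $e_1\in\mathbb R^k$ is the first standard basis vector, $g_1:=(e_1;0)\in\mathbb R^{k+m}$. The two-stage problem (RLP) is: $v^*_{RLP}:=\inf\{c^Tx+\sup_{u\in\mathcal U}d^Ty(u)\}$ over $x\in\mathcal X$ and maps $y:\mathcal U\to\mathbb R^{n_2}$ with $Ax+By(u)\ge Fu$ for all $u\in\mathcal U$. Standing assumptions: (A1) $\mathcal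 X$ and $\widehat{\mathcal U}$ are computationally tractable; (A2) (RLP) is feasible; (A3) $v^*_{RLP}$ is finite; (A4) relatively complete recourse: for all $x\in\mathcal X$, $u\in\mathcal U$ there is $y\in\mathbb R^{n_2}$ with $By\ge Fu-Ax$. Define $\mathcal W:=\{w\in\mathbb R^m: w\ge0,\ B^Tw=d\}$, $E:=\begin{pmatrix}-de_1^T & B^T\end{pmatrix}\in\mathbb R^{n_2\times(k+m)}$, $G(x):=\begin{pmatrix}0&(F-Axe_1^T)^T\\ F-Axe_1^T&0\end{pmatrix}\in\mathcal S^{k+m}$. For a closed convex cone $\mathcal K\subseteq\mathbb R^n$, $\mathrm{COP}(\mathcal K):=\{M\in\mathcal S^n: z^TMz\ge0\ \forall z\in\mathcal K\}$. *)

From Stdlib Require Import Reals.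
From mathcomp Require Import ssreflect ssrfun ssrbool eqtype ssrnat fintype bigop.
Set Implicit Arguments.
Unset Strict Implicit.
Unset Printing Implicit Defensive.
Local Open Scope R_scope.

Definition vec (n : nat) := 'I_n -> R.
Definition mat (p q : nat) := 'I_p -> 'I_q -> R.

Definition sumI (n : nat) (f : 'I_n -> R) : R := \big[Rplus/R0]_(i < n) f i.
Definition dot (n : nat) (u v : vec n) : R := sumI (fun i => u i * v i).
Definition mulmv (p q : nat) (A : mat p q) (v : vec q) : vec p :=
  fun i => sumI (fun j => A i j * v j).
Definition vsub (n : nat) (u v : vec n) : vec n := fun i => u i - v i.
Definition vscale (n : nat) (t : R) (u : vec n) : vec n := fun i => t * u i.
Definition vadd (n : nat) (u v : vec n) : vec n := fun i => u i + v i.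
Definition dist2 (n : nat) (u v : vec n) : R := dot (vsub u v) (vsub u v).
Definition qform (n : nat) (M : mat n n) (z : vec n) : R :=
  sumI (fun i => sumI (fun j => z i * M i j * z j)).

Definition vconvex (n : nat) (S : vec n -> Prop) : Prop :=
  forall u v t, S u -> S v -> 0 <= t <= 1 ->
    S (vadd (vscale t u) (vscale (1 - t) v)).
Definition vclosed (n : nat) (S : vec n -> Prop) : Prop :=
  forall x, (forall eps, 0 < eps -> exists y, S y /\ dist2 x y < eps) -> S x.
Definition vbounded (n : nat) (S : vec n -> Prop) : Prop :=
  exists M, forall u, S u -> dot u u <= M.
Definition vcompact (n : nat) (S : vec n -> Prop) : Prop := vclosed S /\ vbounded S.
Definition vcone (n : nat) (S : vec n -> Prop) : Prop :=
  forall u t, S u -> 0 <= t -> S (vscale t u).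
Definition vfull_dim (n : nat) (S : vec n -> Prop) : Prop :=
  exists x eps, 0 < eps /\ forall y, dist2 x y < eps -> S y.
Definition extreme_point (n : nat) (S : vec n -> Prop) (w : vec n) : Prop :=
  S w /\ forall a b t, S a -> S b -> 0 < t < 1 ->
    w = vadd (vscale t a) (vscale (1 - t) b) -> a = w /\ b = w.

Definition is_glb (S : R -> Prop) (v : R) : Prop :=
  (forall t, S t -> v <= t) /\ (forall v', (forall t, S t -> v' <= t) -> v' <= v).

(* ---- data of the problem; the first-stage index k is written K.+1 ---- *)
Section Problem.
Variables (m n1 n2 K : nat).
Variables (A : mat m n1) (B : mat m n2) (c : vec n1) (d : vec n2) (F : mat m K.+1).
Variables (X : vec n1 -> Prop) (Uhat : vec K.+1 -> Prop).

Definition Uset (u : vec K.+1) : Prop := Uhat u /\ u ord0 = 1.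

Definition Wset (w : vec m) : Prop :=
  (forall i, 0 <= w i) /\ (forall j, sumI (fun i => B i j * w i) = d j).

Definition RLP_feasible (x : vec n1) (y : vec K.+1 -> vec n2) : Prop :=
  X x /\ forall u, Uset u -> forall i,
    mulmv A x i + mulmv B (y u) i >= mulmv F u i.

(* the set of finite objective values c^T x + sup_{u in U} d^T y(u) of (RLP)
   (feasible pairs whose inner supremum is +infinity contribute +infinity and
   hence do not affect the infimum) *)
Definition RLP_values (t : R) : Prop :=
  exists x y s, RLP_feasible x y /\
    is_lub (fun z => exists u, Uset u /\ z = dot d (y u)) s /\
    t = dot c x + s.

(* block-matrix objects in S^{k+m}, indices split as 'I_(K.+1) + 'I_m *)
Definition FAx (x : vec n1) : mat m K.+1 :=
  fun i j => F i j - mulmv A x i * (if j == ord0 then 1 else 0).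

Definition Gx (x : vec n1) : mat (K.+1 + m) (K.+1 + m) :=
  fun i j => match split i, split j with
             | inl a, inr b => FAx x b a
             | inr b, inl a => FAx x b a
             | _, _ => 0
             end.

Definition Emat : mat n2 (K.+1 + m) :=
  fun i j => match split j with
             | inl a => - d i * (if a == ord0 then 1 else 0)
             | inr b => B b i
             end.

Definition g1g1T : mat (K.+1 + m) (K.+1 + m) :=
  fun i j => match split i, split j with
             | inl a, inl b => if (a == ord0) && (b == ord0) then 1 else 0
             | _, _ => 0
             end.

Definition LamE (Lam : mat (K.+1 + m) n2) : mat (K.+1 + m) (K.+1 + m) :=
  fun i j => sumI (fun l => Lam i l * Emat l j).

Definition Mbar (x : vec n1) (lam : R) (Lam : mat (K.+1 + m) n2) (rho : R)
  : mat (K.+1 + m) (K.+1 + m) :=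
  fun i j => lam * g1g1T i j - / 2 * Gx x i j
             + / 2 * (LamE Lam j i + LamE Lam i j)
             + rho * (if i == j then 1 else 0).

Definition Kcone (z : vec (K.+1 + m)) : Prop :=
  Uhat (fun a => z (lshift m a)) /\ forall b, 0 <= z (rshift K.+1 b).

Definition COP (M : mat (K.+1 + m) (K.+1 + m)) : Prop :=
  (forall i j, M i j = M j i) /\ forall z, Kcone z -> 0 <= qform M z.

Definition RLPbar_values (r t : R) : Prop :=
  exists x lam Lam rho, X x /\ COP (Mbar x lam Lam rho) /\ 0 <= rho /\
    t = dot c x + lam + r * rho.

End Problem.

(* If (x, lam, Lam, rho) is feasible for (RLP-bar), evaluate the copositive matrix at
   z = (u; w) with u in U and w an extreme point of W: then E z = 0 kills the Lam-term and
   w^T (F u - A x) <= lam + r rho.  Relatively complete recourse makes the objective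
   nonpositive along recession directions of W, so every point of W is dominated by an
   extreme point, and LP duality (Farkas' lemma, by Fourier-Motzkin elimination) gives a
   recourse y(u) of cost at most lam + r rho in every scenario.
   Conversely, if (x, y) is feasible with worst-case recourse cost s, then
   lam = s + eps/2, Lam = mu E^T, rho = eps/(4r) is feasible for large mu.  By homogeneity
   it suffices to test z = (u; w) with u in U; comparing with the recourse y(g) of a nearby
   scenario g from a finite grid of representatives (so the y(g) are uniformly bounded,
   although y need not be), the errors are absorbed into mu ||E z||^2 and rho ||w||^2 by
   AM-GM. *)

From Stdlib Require Import Reals.
From mathcomp Require Import ssreflect ssrfun ssrbool eqtype ssrnat fintype bigop.
From Stdlib Require Import Lra Lia Psatz Classical FunctionalExtensionality ClassicalEpsilon.
From mathcomp Require Import seq finfun.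
From HB Require Import structures.
Set Implicit Arguments.
Unset Strict Implicit.
Unset Printing Implicit Defensive.
Local Open Scope R_scope.

HB.instance Definition _ := Monoid.isComLaw.Build R R0 Rplus
  (fun x y z => esym (Rplus_assoc x y z)) Rplus_comm Rplus_0_l.

Local Notation "\sum_ ( i : t ) F" := (\big[Rplus/R0]_(i : t) F%R) : R_scope.

Lemma split_lshift p q (a : 'I_p) : split (lshift q a) = inl a.
Proof. exact: (unsplitK (inl a)). Qed.

Lemma split_rshift p q (b : 'I_q) : split (rshift p b) = inr b.
Proof. exact: (unsplitK (inr b)). Qed.

Section RealSums.
Variable I : finType.
Implicit Types f g : I -> R.

Lemma big_Radd f g : \sum_(i : I) (f i + g i) = \sum_(i : I) f i + \sum_(i : I) g i.
Proof. exact: big_split. Qed.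

Lemma big_Rscale c f : \sum_(i : I) (c * f i) = c * \sum_(i : I) f i.
Proof. by symmetry; apply: (big_morph (fun x => c * x)) => [x y|]; ring. Qed.

Lemma big_Rle f g : (forall i, f i <= g i) -> \sum_(i : I) f i <= \sum_(i : I) g i.
Proof. by move=> H; apply: (big_ind2 Rle) => [|*|i _]; [lra|lra|apply: H]. Qed.

Lemma big_Rge0 f : (forall i, 0 <= f i) -> 0 <= \sum_(i : I) f i.
Proof. by move=> H; apply: (big_ind (Rle 0)) => [|*|i _]; [lra|lra|apply: H]. Qed.

Lemma big_Rterm f j : (forall i, 0 <= f i) -> f j <= \sum_(i : I) f i.
Proof.
move=> H; rewrite (bigD1 j) //=.
have : 0 <= \big[Rplus/R0]_(i | i != j) f i by apply: (big_ind (Rle 0)) => [|*|i _]; [lra|lra|apply: H].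
lra.
Qed.

Lemma big_Rdelta f j : \sum_(i : I) (if i == j then f i else 0) = f j.
Proof. by rewrite (bigD1 j) //= eqxx big1 ?Rplus_0_r // => i /negbTE ->. Qed.

End RealSums.

Lemma big_bilinear_assoc (I J : finType) (a : I -> R) (M : I -> J -> R) (b : J -> R) :
  \sum_(j : J) (\sum_(i : I) a i * M i j) * b j = \sum_(i : I) a i * \sum_(j : J) M i j * b j.
Proof.
rewrite (eq_bigr (fun j => \sum_(i : I) a i * M i j * b j)); last first.
  by move=> j _; rewrite [LHS]Rmult_comm -big_Rscale; apply: eq_bigr => i _; ring.
rewrite exchange_big; apply: eq_bigr => i _.
by rewrite -big_Rscale; apply: eq_bigr => j _; ring.
Qed.

Section SumI.
Variable n : nat.
Implicit Types f g : 'I_n -> R.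

Lemma sumI_ext f g : (forall i, f i = g i) -> sumI f = sumI g.
Proof. by move=> H; apply: eq_bigr => i _. Qed.
Lemma sumI_add f g : sumI (fun i => f i + g i) = sumI f + sumI g.
Proof. exact: big_Radd. Qed.
Lemma sumI_scale c f : sumI (fun i => c * f i) = c * sumI f.
Proof. exact: big_Rscale. Qed.
Lemma sumI_scale_r c f : sumI (fun i => f i * c) = sumI f * c.
Proof. by rewrite Rmult_comm -sumI_scale; apply: sumI_ext => i; ring. Qed.
Lemma sumI_opp f : sumI (fun i => - f i) = - sumI f.
Proof.
have -> : - sumI f = -1 * sumI f by ring.
by rewrite -sumI_scale; apply: sumI_ext => i; ring.
Qed.
Lemma sumI_sub f g : sumI (fun i => f i - g i) = sumI f - sumI g.
Proof. by rewrite /Rminus -sumI_opp -sumI_add. Qed.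
Lemma sumI_le f g : (forall i, f i <= g i) -> sumI f <= sumI g.
Proof. exact: big_Rle. Qed.
Lemma sumI_ge0 f : (forall i, 0 <= f i) -> 0 <= sumI f.
Proof. exact: big_Rge0. Qed.
Lemma sumI_zero f : (forall i, f i = 0) -> sumI f = 0.
Proof. by move=> H; rewrite /sumI big1. Qed.
Lemma sumI_term f j : (forall i, 0 <= f i) -> f j <= sumI f.
Proof. exact: big_Rterm. Qed.
Lemma sumI_delta f j : sumI (fun i => if i == j then f i else 0) = f j.
Proof. exact: big_Rdelta. Qed.
Lemma sumI_abs f : Rabs (sumI f) <= sumI (fun i => Rabs (f i)).
Proof.
apply: (big_ind2 (fun x y => Rabs x <= y)) => [|x1 x2 y1 y2 H1 H2|i _].
- by rewrite Rabs_R0; lra.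
- by apply: Rle_trans (Rabs_triang _ _) _; lra.
- lra.
Qed.

End SumI.

Lemma sumI_exch p q (f : 'I_p -> 'I_q -> R) :
  sumI (fun i => sumI (fun j => f i j)) = sumI (fun j => sumI (fun i => f i j)).
Proof. exact: exchange_big. Qed.

Lemma sumI_split p q (f : 'I_(p + q) -> R) :
  sumI f = sumI (fun a => f (lshift q a)) + sumI (fun b => f (rshift p b)).
Proof. exact: big_split_ord. Qed.

Lemma sumI_recl n (f : 'I_n.+1 -> R) : sumI f = f ord0 + sumI (fun i => f (lift ord0 i)).
Proof. exact: big_ord_recl. Qed.

Lemma sumI_mul p q (f : 'I_p -> R) (g : 'I_q -> R) :
  sumI (fun i => sumI (fun j => f i * g j)) = sumI f * sumI g.
Proof. by rewrite -sumI_scale_r; apply: sumI_ext => i; rewrite sumI_scale. Qed.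

Lemma dot_ge0 n (u : vec n) : 0 <= dot u u.
Proof. by apply: sumI_ge0 => i; apply: Rle_0_sqr. Qed.

Lemma dot_mulmv m n (B : mat m n) (w : vec m) (y : vec n) :
  dot w (mulmv B y) = sumI (fun l => sumI (fun i => B i l * w i) * y l).
Proof.
rewrite (sumI_ext (g := fun l => sumI (fun i => w i * B i l) * y l)); last first.
  by move=> l; congr (_ * _); apply: sumI_ext => i; ring.
exact: esym (big_bilinear_assoc _ _ _).
Qed.

Lemma dot_le_mulmv m n (B : mat m n) (b w : vec m) (y : vec n) :
  (forall i, 0 <= w i) -> (forall i, mulmv B y i >= b i) ->
  dot w b <= sumI (fun l => sumI (fun i => B i l * w i) * y l).
Proof.
move=> Hw Hy; rewrite -dot_mulmv; apply: sumI_le => i.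
by apply: Rmult_le_compat_l; [apply: Hw | have := Hy i; lra].
Qed.

Lemma seq_argmin (I : eqType) (P : I -> Prop) (f : I -> R) (s : seq I) :
  (exists2 i, i \in s & P i) ->
  exists i0, [/\ i0 \in s, P i0 & forall i, i \in s -> P i -> f i0 <= f i].
Proof.
elim: s => [|a s IH]; first by case.
case=> i Hi HPi.
have [[i0 [s_i0 P_i0 min_i0]]|no_s] :=
  classic (exists i0, [/\ i0 \in s, P i0 & forall i, i \in s -> P i -> f i0 <= f i]).
- have [[Pa le_a]|] := classic (P a /\ f a <= f i0).
  + exists a; split=> [|//|j]; first by rewrite inE eqxx.
    rewrite inE => /orP [/eqP -> _|s_j P_j]; first lra.
    by have := min_i0 j s_j P_j; lra.
  + move=> not_a; exists i0; split=> [|//|j]; first by rewrite inE s_i0 orbT.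
    rewrite inE => /orP [/eqP -> P_j|]; last exact: min_i0.
    by apply: Rnot_lt_le => lt_a; apply: not_a; split=> //; lra.
- have not_in_s : ~ exists2 j, j \in s & P j by move=> /IH.
  have Hia : i = a.
    by move: Hi; rewrite inE => /orP [/eqP //|s_i]; case: not_in_s; exists i.
  subst i; exists a; split=> [|//|j]; first by rewrite inE eqxx.
  rewrite inE => /orP [/eqP -> _|s_j P_j]; first lra.
  by case: not_in_s; exists j.
Qed.

Lemma fin_argmin (I : finType) (P : I -> Prop) (f : I -> R) :
  (exists i, P i) -> exists i0, P i0 /\ forall i, P i -> f i0 <= f i.
Proof.
case=> i Hi; have [|i0 [_ P_i0 min_i0]] := @seq_argmin I P f (enum I).
  by exists i; rewrite ?mem_enum.
by exists i0; split=> // j P_j; apply: min_i0; rewrite ?mem_enum.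
Qed.

Lemma fin_argmax (I : finType) (P : I -> Prop) (f : I -> R) :
  (exists i, P i) -> exists i0, P i0 /\ forall i, P i -> f i <= f i0.
Proof.
move=> /(fin_argmin (fun i => - f i)) [i0 [P_i0 min_i0]].
by exists i0; split=> // i P_i; have := min_i0 i P_i; lra.
Qed.

Lemma fin_separating_point (I : finType) (P N : I -> Prop) (up lo : I -> R) :
  (forall i j, P i -> N j -> lo j <= up i) ->
  exists t, (forall i, P i -> t <= up i) /\ (forall j, N j -> lo j <= t).
Proof.
move=> Hsep; have [HP|noP] := classic (exists i, P i).
  have [i0 [P_i0 min_i0]] := fin_argmin up HP.
  by exists (up i0); split=> // j N_j; apply: Hsep.
have [HN|noN] := classic (exists j, N j).
  have [j0 [N_j0 max_j0]] := fin_argmax lo HN.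
  by exists (lo j0); split=> // i P_i; case: noP; exists i.
by exists 0; split=> [i P_i|j N_j]; [case: noP; exists i|case: noN; exists j].
Qed.

Definition lin_feasible (I : finType) n (G : I -> 'I_n -> R) (h : I -> R) :=
  exists y : vec n, forall i, sumI (fun l => G i l * y l) <= h i.

Definition vcons n (t : R) (y : vec n) : vec n.+1 :=
  fun l => if unlift ord0 l is Some l' then y l' else t.

Lemma sumI_vcons n (f : 'I_n.+1 -> R) t y :
  sumI (fun l => f l * vcons t y l) = f ord0 * t + sumI (fun l => f (lift ord0 l) * y l).
Proof.
rewrite sumI_recl /vcons unlift_none; congr (_ + _).
by apply: sumI_ext => l; rewrite liftK.
Qed.

Section FourierMotzkin.
Variables (I : finType) (n : nat) (G : I -> 'I_n.+1 -> R).

(* Row [ij] of the projected system: the positive combination of a row with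
   positive and a row with negative leading coefficient that cancels the first
   variable, a row with zero leading coefficient itself (for [i = j]), or 0. *)
Definition fm_coef (ij : I * I) (k : I) : R :=
  let (i, j) := ij in
  if Rlt_dec 0 (G i ord0) then
    if Rlt_dec (G j ord0) 0 then
      (if k == i then - G j ord0 else 0) + (if k == j then G i ord0 else 0)
    else 0
  else if i == j then if Req_EM_T (G i ord0) 0 then (if k == i then 1 else 0) else 0
  else 0.

Lemma fm_coef_ge0 ij k : 0 <= fm_coef ij k.
Proof.
case: ij => i j; rewrite /fm_coef /=.
case: Rlt_dec => Hi /=; [case: Rlt_dec => Hj /=|].
- by case: (k == i); case: (k == j); lra.
- lra.
- by case: (i == j); [case: Req_EM_T => _ /=; [case: (k == i)|]|]; lra.
Qed.

Lemma fm_combination ij (f : I -> R) :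
  \sum_(k : I) fm_coef ij k * f k =
  let (i, j) := ij in
  if Rlt_dec 0 (G i ord0) then
    if Rlt_dec (G j ord0) 0 then - G j ord0 * f i + G i ord0 * f j else 0
  else if i == j then if Req_EM_T (G i ord0) 0 then f i else 0 else 0.
Proof.
case: ij => i j; rewrite /fm_coef /=.
case: Rlt_dec => Hi /=; [case: Rlt_dec => Hj /=|].
- rewrite (eq_bigr (fun k => (if k == i then - G j ord0 * f k else 0)
                          + (if k == j then G i ord0 * f k else 0))).
    by rewrite big_Radd !big_Rdelta.
  by move=> k _; case: (k == i); case: (k == j); ring.
- by rewrite big1 // => k _; ring.
- case: (i == j); last by rewrite big1 // => k _; ring.
  case: Req_EM_T => _ /=; last by rewrite big1 // => k _; ring.
  rewrite (eq_bigr (fun k => if k == i then f k else 0)) ?big_Rdelta //.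
  by move=> k _; case: (k == i); ring.
Qed.

Lemma fm_lift_feasible (h : I -> R) :
  lin_feasible (fun ij l => \sum_(k : I) fm_coef ij k * G k (lift ord0 l))
               (fun ij => \sum_(k : I) fm_coef ij k * h k) ->
  lin_feasible G h.
Proof.
case=> y Hy.
pose r i := sumI (fun l => G i (lift ord0 l) * y l).
have Hrow ij : \sum_(k : I) fm_coef ij k * r k <= \sum_(k : I) fm_coef ij k * h k.
  by have := Hy ij; rewrite /sumI big_bilinear_assoc.
have Hpair i j : 0 < G i ord0 -> G j ord0 < 0 ->
    - G j ord0 * r i + G i ord0 * r j <= - G j ord0 * h i + G i ord0 * h j.
  move=> Hi Hj; have := Hrow (i, j); rewrite !fm_combination /=.
  by do 2!case: Rlt_dec => // _ /=.
have Hzero i : G i ord0 = 0 -> r i <= h i.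
  move=> Hi; have := Hrow (i, i); rewrite !fm_combination /=.
  case: Rlt_dec => [H|_ /=]; first lra.
  by rewrite eqxx; case: Req_EM_T.
case: (@fin_separating_point I (fun i => 0 < G i ord0) (fun j => G j ord0 < 0)
         (fun i => (h i - r i) / G i ord0) (fun j => (h j - r j) / G j ord0)).
  move=> i j /= Hi Hj; have := Hpair i j Hi Hj.
  have Eu : (h i - r i) / G i ord0 * G i ord0 = h i - r i by field; lra.
  have El : (h j - r j) / G j ord0 * G j ord0 = h j - r j by field; lra.
  move: Eu El; set up := (h i - r i) / _; set lo := (h j - r j) / _ => Eu El Hp.
  have : 0 <= G i ord0 * - G j ord0 * (up - lo) by nra.
  have : 0 < G i ord0 * - G j ord0 by nra.
  nra.
move=> t [Ht_up Ht_lo]; exists (vcons t y) => i; rewrite sumI_vcons -/(r i).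
have Ediv : G i ord0 <> 0 -> (h i - r i) / G i ord0 * G i ord0 = h i - r i by move=> ?; field.
case: (Rtotal_order 0 (G i ord0)) => [Hp|[Hz|Hn]].
- by have := Ht_up i Hp; have := Ediv ltac:(lra); nra.
- by rewrite -Hz; have := Hzero i (esym Hz); lra.
- by have := Ht_lo i Hn; have := Ediv ltac:(lra); nra.
Qed.

End FourierMotzkin.

Theorem farkas n (I : finType) (G : I -> 'I_n -> R) (h : I -> R) :
  ~ lin_feasible G h ->
  exists p : I -> R, [/\ forall i, 0 <= p i,
    forall l, \sum_(i : I) p i * G i l = 0 & \sum_(i : I) p i * h i < 0].
Proof.
elim: n I G h => [|n IH] I G h infeasible.
  have [i /Rnot_le_lt Hi] : exists i, ~ 0 <= h i.
    apply: not_all_ex_not => Hh; apply: infeasible; exists (fun _ => 0) => i.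
    by rewrite /sumI big_ord0; apply: Hh.
  exists (fun k => if k == i then 1 else 0); split=> [k|[]//|].
    by case: (k == i); lra.
  by rewrite (eq_bigr (fun k => if k == i then h k else 0)) ?big_Rdelta // => k _; case: (k == i); ring.
have [q [q_ge0 q_col q_val]] := IH _ _ _ (contra_not (@fm_lift_feasible _ _ G h) infeasible).
exists (fun k => \sum_(ij : I * I) q ij * fm_coef G ij k); split.
- by move=> k; apply: big_Rge0 => ij; apply: Rmult_le_pos; [apply: q_ge0|apply: fm_coef_ge0].
- move=> l; rewrite big_bilinear_assoc.
  case: (unliftP ord0 l) => [l' ->|->]; first exact: q_col.
  rewrite big1 // => ij _; rewrite fm_combination; case: ij => i j.
  do 2?case: Rlt_dec => _ /=; try ring.
  case: (i == j); last ring.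
  by case: Req_EM_T => [Hz|_] /=; [rewrite Hz|]; ring.
- by rewrite big_bilinear_assoc.
Qed.

Lemma dot_add n (a a' c : vec n) : dot (fun i => a i + a' i) c = dot a c + dot a' c.
Proof. by rewrite /dot -sumI_add; apply: sumI_ext => i; ring. Qed.

Lemma dot_scale n t (a c : vec n) : dot (fun i => t * a i) c = t * dot a c.
Proof. by rewrite /dot -sumI_scale; apply: sumI_ext => i; ring. Qed.

Lemma dot_opp n (a c : vec n) : dot (fun i => - a i) c = - dot a c.
Proof. by rewrite /dot -sumI_opp; apply: sumI_ext => i; ring. Qed.

Lemma lp_duality_bound m n (B : mat m n) (d : vec n) (b : vec m) (beta : R) :
  (exists y0 : vec n, forall i, mulmv B y0 i >= b i) ->
  (forall w, Wset B d w -> dot w b <= beta) ->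
  exists y : vec n, (forall i, mulmv B y i >= b i) /\ dot d y <= beta.
Proof.
move=> [y0 Hy0] HW; apply: NNPP => no_y.
pose G (k : 'I_m.+1) l := if unlift ord0 k is Some i then - B i l else d l.
pose h (k : 'I_m.+1) := if unlift ord0 k is Some i then - b i else beta.
have infeasible : ~ lin_feasible G h.
  case=> y Hy; apply: no_y; exists y; split; last by have := Hy ord0; rewrite /G /h unlift_none.
  move=> i; have := Hy (lift ord0 i); rewrite /G /h liftK /mulmv.
  by rewrite (sumI_ext (g := fun l => - (B i l * y l))) ?sumI_opp => [|l]; [lra|ring].
have [p [p_ge0 p_col p_val]] := farkas infeasible.
pose t := p ord0; pose w : vec m := fun i => p (lift ord0 i).
have w_ge0 i : 0 <= w i by apply: p_ge0.
have Hcol l : sumI (fun i => B i l * w i) = t * d l.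
  have := p_col l; rewrite big_ord_recl /G unlift_none -/t.
  rewrite (eq_bigr (fun i => - (B i l * w i))) => [|i _]; last by rewrite liftK /w; ring.
  by rewrite -/(sumI _) sumI_opp; lra.
have Hval : t * beta < dot w b.
  move: p_val; rewrite big_ord_recl /h unlift_none -/t.
  rewrite (eq_bigr (fun i => - (w i * b i))) => [|i _]; last by rewrite liftK /w; ring.
  by rewrite -/(sumI _) sumI_opp /dot; lra.
case: (Rle_lt_or_eq_dec 0 t (p_ge0 ord0)) => [t_pos|t0].
- have : Wset B d (fun i => / t * w i).
    split=> [i|j]; first by apply: Rmult_le_pos; [apply/Rlt_le/Rinv_0_lt_compat|].
    rewrite (sumI_ext (g := fun i => / t * (B i j * w i))) => [|i]; last ring.
    by rewrite sumI_scale Hcol; field; lra.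
  move=> /HW; rewrite dot_scale => Hle.
  have := Rmult_le_compat_l t _ _ (Rlt_le _ _ t_pos) Hle.
  rewrite -Rmult_assoc Rinv_r ?Rmult_1_l; last exact: Rgt_not_eq.
  by move=> ?; lra.
- have : dot w b <= 0.
    apply: Rle_trans (dot_le_mulmv w_ge0 Hy0) _; rewrite sumI_zero; first lra.
    by move=> l; rewrite Hcol -t0; ring.
  by rewrite -t0 in Hval; lra.
Qed.

Definition support_size m (w : vec m) : nat :=
  (\sum_(i < m) if Rlt_dec 0 (w i) then 1 else 0)%N.

Section ExtremePointReduction.
Variables (m n : nat) (B : mat m n) (d : vec n) (b : vec m).

Lemma Wset_move_support (w tau : vec m) :
  Wset B d w -> (forall j, sumI (fun i => B i j * tau i) = 0) ->
  (forall i, tau i <> 0 -> 0 < w i) -> 0 <= dot tau b -> (exists i, tau i < 0) ->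
  exists w', [/\ Wset B d w', dot w b <= dot w' b & (support_size w' < support_size w)%N].
Proof.
move=> [w_ge0 w_col] tau_col tau_supp tau_val tau_neg.
have [i0 [tau_i0 min_i0]] := fin_argmin (fun i => w i / - tau i) tau_neg.
pose th := w i0 / - tau i0.
have w_i0 : 0 < w i0 by apply: tau_supp; lra.
have th_pos : 0 < th by apply: Rdiv_lt_0_compat; lra.
pose w' i := w i + th * tau i.
have w'_ge0 i : 0 <= w' i.
  rewrite /w'; case: (Rlt_le_dec (tau i) 0) => tau_i; last first.
    have : 0 <= th * tau i by apply: Rmult_le_pos; lra.
    by have := w_ge0 i; lra.
  have := min_i0 i tau_i; rewrite -/th => le_th.
  have : w i / - tau i * - tau i = w i by field; lra.
  have : th * - tau i <= w i / - tau i * - tau i by apply: Rmult_le_compat_r; lra.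
  lra.
exists w'; split.
- split=> // j; rewrite /w' (sumI_ext (g := fun i => B i j * w i + th * (B i j * tau i))).
    by rewrite sumI_add sumI_scale tau_col w_col; ring.
  by move=> i; ring.
- have : 0 <= th * dot tau b by apply: Rmult_le_pos; lra.
  by rewrite /w' dot_add dot_scale; lra.
- rewrite /support_size (bigD1 i0) //= (bigD1 i0 (P := predT)) //=.
  have w'_i0 : w' i0 = 0 by rewrite /w' /th; field; lra.
  destruct (Rlt_dec 0 (w' i0)) as [w'_pos|]; first lra.
  destruct (Rlt_dec 0 (w i0)) as [|w_nonpos]; last lra.
  rewrite add0n ltnS; apply: leq_sum => i _.
  destruct (Rlt_dec 0 (w' i)) as [w'_pos|]; destruct (Rlt_dec 0 (w i)) as [|not_w_pos] => //=.
  have w_i : w i = 0 by have := w_ge0 i; lra.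
  have tau_i : tau i = 0 by apply: NNPP => /tau_supp; lra.
  by move: w'_pos; rewrite /w' w_i tau_i; lra.
Qed.

Hypothesis recession_nonpos : forall dl : vec m, (forall i, 0 <= dl i) ->
  (forall j, sumI (fun i => B i j * dl i) = 0) -> dot dl b <= 0.

Lemma Wset_move_support_dir (w tau : vec m) :
  Wset B d w -> (forall j, sumI (fun i => B i j * tau i) = 0) ->
  (forall i, tau i <> 0 -> 0 < w i) -> 0 <= dot tau b -> (exists i, tau i <> 0) ->
  exists w', [/\ Wset B d w', dot w b <= dot w' b & (support_size w' < support_size w)%N].
Proof.
move=> Ww tau_col tau_supp tau_val [i1 tau_i1].
have [tau_neg|] := classic (exists i, tau i < 0).
  exact: Wset_move_support tau_neg.
move=> /not_ex_all_not tau_ge0; have {}tau_ge0 i : 0 <= tau i by apply: Rnot_lt_le.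
(* a nonnegative recession direction of W has value exactly 0, so -tau works as well *)
have := recession_nonpos tau_ge0 tau_col => tau_le0.
apply: (@Wset_move_support w (fun i => - tau i) Ww).
- by move=> j; rewrite (sumI_ext (g := fun i => - (B i j * tau i))) ?sumI_opp ?tau_col => [|i]; ring.
- by move=> i Hi; apply: tau_supp => tau_i; apply: Hi; rewrite tau_i; ring.
- by rewrite dot_opp; lra.
- by exists i1; have := tau_ge0 i1; lra.
Qed.

Lemma nonextreme_move_support (w : vec m) :
  Wset B d w -> ~ extreme_point (Wset B d) w ->
  exists w', [/\ Wset B d w', dot w b <= dot w' b & (support_size w' < support_size w)%N].
Proof.
move=> Ww not_ext.
have [a [c [t [Wa Wc t01 w_eq a_ne]]]] : exists a c t, [/\ Wset B d a, Wset B d c,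
    0 < t < 1, w = vadd (vscale t a) (vscale (1 - t) c) & a <> w].
  apply: NNPP => H; apply: not_ext; split=> // a c t Wa Wc t01 w_eq.
  have a_w : a = w by apply: NNPP => a_ne; apply: H; exists a, c, t.
  split=> //; apply: functional_extensionality => i.
  have := f_equal (fun v => v i) w_eq; rewrite /vadd /vscale a_w => Hi.
  by apply: (Rmult_eq_reg_l (1 - t)); lra.
have w_i i : w i = t * a i + (1 - t) * c i by rewrite w_eq.
have [i1 a_i1] : exists i, a i - w i <> 0.
  apply: NNPP => H; apply: a_ne; apply: functional_extensionality => i.
  by apply: NNPP => ne; apply: H; exists i; lra.
case: (Ww) => w_ge0 w_col; case: (Wa) => a_ge0 a_col; case: Wc => c_ge0 _.
have dir_col j : sumI (fun i => B i j * (a i - w i)) = 0.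
  rewrite (sumI_ext (g := fun i => B i j * a i - B i j * w i)) => [|i]; last ring.
  by rewrite sumI_sub a_col w_col; ring.
(* a coordinate where w vanishes vanishes at a and c too *)
have dir_supp i : a i - w i <> 0 -> 0 < w i.
  move=> ne; case: (Rle_lt_or_eq_dec 0 (w i) (w_ge0 i)) => // w0; case: ne.
  have := w_i i; have : 0 <= (1 - t) * c i by apply: Rmult_le_pos; [lra|apply: c_ge0].
  have : 0 <= t * a i by apply: Rmult_le_pos; [lra|apply: a_ge0].
  move=> ? ? ?; have : t * a i = 0 by lra.
  by case/Rmult_integral => ?; lra.
case: (Rle_lt_dec 0 (dot (fun i => a i - w i) b)) => dir_val.
  by apply: (@Wset_move_support_dir w (fun i => a i - w i)) => //; exists i1.
apply: (@Wset_move_support_dir w (fun i => - (a i - w i))) => //.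
- move=> j; rewrite (sumI_ext (g := fun i => - (B i j * (a i - w i)))) => [|i]; last ring.
  by rewrite sumI_opp dir_col; ring.
- by move=> i Hi; apply: dir_supp => H; apply: Hi; rewrite H; ring.
- by rewrite dot_opp; lra.
- by exists i1; lra.
Qed.

Lemma extreme_point_dominates (w : vec m) : Wset B d w ->
  exists e, extreme_point (Wset B d) e /\ dot w b <= dot e b.
Proof.
move: {2}(support_size w) (leqnn (support_size w)) => k.
elim: k w => [|k IH] w Hk Ww;
  (have [ext|not_ext] := classic (extreme_point (Wset B d) w); first by exists w; split=> //; lra);
  have [w' [Ww' le_w' lt_w']] := nonextreme_move_support Ww not_ext.
  by move: (leq_trans lt_w' Hk).
have [e [ext_e le_e]] := IH w' (leq_trans lt_w' Hk) Ww'.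
by exists e; split=> //; lra.
Qed.

End ExtremePointReduction.

Lemma qform_split p q (M : mat (p + q) (p + q)) (z : vec (p + q)) :
  qform M z =
    sumI (fun a => sumI (fun a' => z (lshift q a) * M (lshift q a) (lshift q a') * z (lshift q a')))
  + sumI (fun a => sumI (fun b => z (lshift q a) * M (lshift q a) (rshift p b) * z (rshift p b)))
  + sumI (fun b => sumI (fun a => z (rshift p b) * M (rshift p b) (lshift q a) * z (lshift q a)))
  + sumI (fun b => sumI (fun b' => z (rshift p b) * M (rshift p b) (rshift p b') * z (rshift p b'))).
Proof.
have split_inner r (f : 'I_r -> 'I_(p + q) -> R) : sumI (fun i => sumI (f i)) =
    sumI (fun i => sumI (fun a => f i (lshift q a))) + sumI (fun i => sumI (fun b => f i (rshift p b))).
  by rewrite -sumI_add; apply: sumI_ext => i; rewrite sumI_split.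
rewrite /qform sumI_split (split_inner _ (fun a j => z (lshift q a) * M (lshift q a) j * z j)).
by rewrite (split_inner _ (fun b j => z (rshift p b) * M (rshift p b) j * z j)); ring.
Qed.

Lemma qform_trmx n (M : mat n n) (z : vec n) : qform (fun i j => M j i) z = qform M z.
Proof. by rewrite /qform sumI_exch; apply: sumI_ext => i; apply: sumI_ext => j; ring. Qed.

Definition Ez m n2 K (B : mat m n2) (d : vec n2) (u : vec K.+1) (w : vec m) : vec n2 :=
  fun l => - d l * u ord0 + sumI (fun b => B b l * w b).

Section QuadraticForm.
Variables (m n1 n2 K : nat) (A : mat m n1) (B : mat m n2) (d : vec n2) (F : mat m K.+1).
Variables (x : vec n1) (lam : R) (Lam : mat (K.+1 + m) n2) (rho : R) (z : vec (K.+1 + m)).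
Let u := fun a => z (lshift m a).
Let w := fun b => z (rshift K.+1 b).

Lemma qform_Mbar_lin :
  qform (Mbar A B d F x lam Lam rho) z =
    lam * qform (@g1g1T m K) z - / 2 * qform (Gx A F x) z
    + / 2 * qform (fun i j => LamE B d Lam j i) z + / 2 * qform (LamE B d Lam) z
    + rho * qform (fun i j => if i == j then 1 else 0) z.
Proof.
rewrite /qform /Mbar /Rminus Ropp_mult_distr_l -!sumI_scale -!sumI_add; apply: sumI_ext => i.
by rewrite -!sumI_scale -!sumI_add; apply: sumI_ext => j; ring.
Qed.

Lemma qform_g1g1T : qform (@g1g1T m K) z = u ord0 * u ord0.
Proof.
rewrite qform_split /g1g1T.
rewrite [X in _ + X + _ + _]sumI_zero => [|a].
  2: by apply: sumI_zero => b; rewrite split_lshift split_rshift; ring.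
rewrite [X in _ + X + _]sumI_zero => [|b].
  2: by apply: sumI_zero => a; rewrite split_lshift split_rshift; ring.
rewrite [X in _ + X]sumI_zero => [|b]; last by apply: sumI_zero => b'; rewrite split_rshift; ring.
rewrite (sumI_ext (g := fun a => if a == ord0 then u a * u ord0 else 0)) ?sumI_delta; first ring.
move=> a; rewrite -(sumI_delta (fun a' => if a == ord0 then u a * u a' else 0)).
apply: sumI_ext => a'; rewrite !split_lshift /u.
by case: (a == ord0); case: (a' == ord0) => /=; ring.
Qed.

Lemma FAx_mul b : sumI (fun a => FAx A F x b a * u a) = mulmv F u b - mulmv A x b * u ord0.
Proof.
rewrite /FAx (sumI_ext (g := fun a => F b a * u a - (if a == ord0 then mulmv A x b * u a else 0))).
  by rewrite sumI_sub sumI_delta.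
by move=> a; case: (a == ord0); ring.
Qed.

Lemma qform_Gx :
  qform (Gx A F x) z = 2 * dot w (fun b => mulmv F u b - mulmv A x b * u ord0).
Proof.
have cross : sumI (fun b => sumI (fun a =>
    z (rshift K.+1 b) * Gx A F x (rshift K.+1 b) (lshift m a) * z (lshift m a)))
    = dot w (fun b => mulmv F u b - mulmv A x b * u ord0).
  apply: sumI_ext => b; rewrite -FAx_mul -sumI_scale; apply: sumI_ext => a.
  by rewrite /Gx split_lshift split_rshift /= /u /w; ring.
have cross' : sumI (fun a => sumI (fun b =>
    z (lshift m a) * Gx A F x (lshift m a) (rshift K.+1 b) * z (rshift K.+1 b)))
    = dot w (fun b => mulmv F u b - mulmv A x b * u ord0).
  rewrite sumI_exch -cross; apply: sumI_ext => b; apply: sumI_ext => a.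
  by rewrite /Gx split_lshift split_rshift /=; ring.
rewrite qform_split cross cross'.
rewrite [X in X + _ + _ + _]sumI_zero => [|a].
  2: by apply: sumI_zero => a'; rewrite /Gx !split_lshift; ring.
rewrite [X in _ + X]sumI_zero => [|b].
  2: by apply: sumI_zero => b'; rewrite /Gx !split_rshift; ring.
ring.
Qed.

Lemma Emat_mul l : sumI (fun j => Emat B d l j * z j) = Ez B d u w l.
Proof.
rewrite sumI_split /Ez; congr (_ + _); last by apply: sumI_ext => b; rewrite /Emat split_rshift.
rewrite (sumI_ext (g := fun a => if a == ord0 then - d l * u a else 0)) ?sumI_delta //.
by move=> a; rewrite /Emat split_lshift /u; case: (a == ord0); ring.
Qed.

Lemma qform_LamE :
  qform (LamE B d Lam) z = dot (fun l => sumI (fun i => z i * Lam i l)) (Ez B d u w).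
Proof.
rewrite /qform /LamE /dot.
rewrite (sumI_ext (g := fun i => sumI (fun l => sumI (fun j => z i * Lam i l * (Emat B d l j * z j))))).
  rewrite sumI_exch; apply: sumI_ext => l.
  by rewrite -Emat_mul sumI_mul.
move=> i; rewrite sumI_exch; apply: sumI_ext => j.
by rewrite -sumI_scale -sumI_scale_r; apply: sumI_ext => l; ring.
Qed.

Lemma qform_id : qform (fun i j => if i == j then 1 else 0) z = dot u u + dot w w.
Proof.
rewrite /qform (sumI_ext (g := fun i => z i * z i)) ?sumI_split // => i.
rewrite (sumI_ext (g := fun j => if j == i then z i * z j else 0)) ?sumI_delta // => j.
by have [->|ne] := eqVneq i j; ring.
Qed.

Lemma qform_Mbar :
  qform (Mbar A B d F x lam Lam rho) z =
    lam * (u ord0 * u ord0) - dot w (fun b => mulmv F u b - mulmv A x b * u ord0)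
    + dot (fun l => sumI (fun i => z i * Lam i l)) (Ez B d u w)
    + rho * (dot u u + dot w w).
Proof.
rewrite qform_Mbar_lin qform_g1g1T qform_Gx qform_id (qform_trmx (LamE B d Lam)) qform_LamE.
by field.
Qed.

End QuadraticForm.

Definition join p q (u : vec p) (w : vec q) : vec (p + q) :=
  fun k => match split k with inl a => u a | inr b => w b end.

Lemma join_lshift p q (u : vec p) (w : vec q) : (fun a => join u w (lshift q a)) = u.
Proof. by apply: functional_extensionality => a; rewrite /join split_lshift. Qed.

Lemma join_rshift p q (u : vec p) (w : vec q) : (fun b => join u w (rshift p b)) = w.
Proof. by apply: functional_extensionality => b; rewrite /join split_rshift. Qed.

Lemma qform_Mbar_scenario m n1 n2 K (A : mat m n1) (B : mat m n2) (d : vec n2) (F : mat m K.+1)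
    x lam Lam rho (u : vec K.+1) (w : vec m) :
  u ord0 = 1 -> (forall l, sumI (fun b => B b l * w b) = d l) ->
  qform (Mbar A B d F x lam Lam rho) (join u w) =
    lam - dot w (fun b => mulmv F u b - mulmv A x b) + rho * (dot u u + dot w w).
Proof.
move=> u0 Bw; rewrite qform_Mbar join_lshift join_rshift {1 2 3}/join split_lshift /= u0.
rewrite [X in _ + X + _]sumI_zero => [|l]; last by rewrite /Ez Bw u0; ring.
have -> : (fun b => mulmv F u b - mulmv A x b * 1) = (fun b => mulmv F u b - mulmv A x b).
  by apply: functional_extensionality => b; ring.
ring.
Qed.

Section WeakDuality.
Variables (m n1 n2 K : nat) (A : mat m n1) (B : mat m n2) (c : vec n1) (d : vec n2).
Variables (F : mat m K.+1) (X : vec n1 -> Prop) (Uhat : vec K.+1 -> Prop) (r : R).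
Hypothesis U_nonempty : exists u, Uset Uhat u.
Hypothesis recourse : forall x u, X x -> Uset Uhat u ->
  exists y : vec n2, forall i, mulmv B y i >= mulmv F u i - mulmv A x i.
Hypothesis r_bound : forall u w, Uset Uhat u -> extreme_point (Wset B d) w ->
  dot u u + dot w w <= r.

Variables (x : vec n1) (lam : R) (Lam : mat (K.+1 + m) n2) (rho : R).
Hypotheses (Xx : X x) (cop : COP Uhat (Mbar A B d F x lam Lam rho)) (rho_ge0 : 0 <= rho).

Lemma COP_extreme_bound u w : Uset Uhat u -> extreme_point (Wset B d) w ->
  dot w (fun b => mulmv F u b - mulmv A x b) <= lam + r * rho.
Proof.
move=> [Uu u0] ext_w; have [[w_ge0 w_col] _] := ext_w.
have Kz : Kcone Uhat (join u w).
  by split=> [|b]; [rewrite join_lshift | rewrite /join split_rshift].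
have := proj2 cop _ Kz; rewrite qform_Mbar_scenario // => q_ge0.
have r_uw := r_bound (conj Uu u0) ext_w.
have : rho * (dot u u + dot w w) <= rho * r by apply: Rmult_le_compat_l.
lra.
Qed.

Lemma scenario_recourse u : Uset Uhat u ->
  exists y, (forall i, mulmv B y i >= mulmv F u i - mulmv A x i) /\ dot d y <= lam + r * rho.
Proof.
move=> Uu; have [y0 Hy0] := recourse Xx Uu.
apply: lp_duality_bound; first by exists y0.
have recession dl : (forall i, 0 <= dl i) -> (forall j, sumI (fun i => B i j * dl i) = 0) ->
    dot dl (fun i => mulmv F u i - mulmv A x i) <= 0.
  move=> dl_ge0 dl_col; apply: Rle_trans (dot_le_mulmv dl_ge0 Hy0) _.
  by rewrite sumI_zero => [|l]; [lra | rewrite dl_col; ring].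
move=> w Ww; have [e [ext_e le_e]] := extreme_point_dominates recession Ww.
exact: Rle_trans le_e (COP_extreme_bound Uu ext_e).
Qed.

Lemma RLPbar_dominates_RLP :
  exists t, RLP_values A B c d F X Uhat t /\ t <= dot c x + lam + r * rho.
Proof.
pose good u y := (forall i, mulmv B y i >= mulmv F u i - mulmv A x i) /\ dot d y <= lam + r * rho.
have [yf Hyf] : exists yf : vec K.+1 -> vec n2, forall u, Uset Uhat u -> good u (yf u).
  apply: (choice (fun u y => Uset Uhat u -> good u y)) => u.
  have [Uu|notU] := classic (Uset Uhat u); last by exists (fun _ => 0).
  by have [y Hy] := scenario_recourse Uu; exists y.
pose costs z := exists u, Uset Uhat u /\ z = dot d (yf u).
have costs_le z : costs z -> z <= lam + r * rho by case=> u [Uu ->]; apply: (proj2 (Hyf u Uu)).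
have costs_ne : exists z, costs z by case: U_nonempty => u Uu; exists (dot d (yf u)), u.
have [s lub_s] := completeness costs (ex_intro _ _ costs_le) costs_ne.
exists (dot c x + s); split.
  exists x, yf, s; split=> //; split=> // u Uu i.
  by have := proj1 (Hyf u Uu) i; lra.
by have := proj2 lub_s _ costs_le; lra.
Qed.

End WeakDuality.

Lemma Rdiv_le_quarter a b c : 0 < c -> a <= b * c -> a / (4 * c) <= b / 4.
Proof.
move=> c_pos le_ab; apply: (Rmult_le_reg_r (4 * c)); first lra.
have -> : a / (4 * c) * (4 * c) = a by field; lra.
by have -> : b / 4 * (4 * c) = b * c by field.
Qed.

Lemma amgm_dot n mu (a y : vec n) : 0 < mu ->
  - (dot y y / (4 * mu)) <= mu * dot a a - dot a y.
Proof.
move=> mu_pos.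
have -> : mu * dot a a - dot a y = sumI (fun i => (2 * mu * a i - y i) ^ 2 / (4 * mu))
                                  - dot y y / (4 * mu).
  rewrite /dot /Rdiv -!sumI_scale_r -sumI_scale -sumI_sub -sumI_sub.
  by apply: sumI_ext => i; field; lra.
have : 0 <= sumI (fun i => (2 * mu * a i - y i) ^ 2 / (4 * mu)).
  apply: sumI_ge0 => i; apply: Rmult_le_pos; first exact: pow2_ge_0.
  by apply/Rlt_le/Rinv_0_lt_compat; lra.
lra.
Qed.

Lemma dot_mulmv_close p q (F : mat p q) (u g : vec q) delta :
  (forall a, Rabs (u a - g a) < delta) ->
  dot (fun b => mulmv F u b - mulmv F g b) (fun b => mulmv F u b - mulmv F g b) <=
  sumI (fun b => sumI (fun a => Rabs (F b a)) * sumI (fun a => Rabs (F b a))) * (delta * delta).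
Proof.
move=> close; rewrite /dot -sumI_scale_r; apply: sumI_le => b.
set D := mulmv F u b - mulmv F g b.
have D_le : Rabs D <= sumI (fun a => Rabs (F b a)) * delta.
  rewrite /D /mulmv -sumI_sub -sumI_scale_r; apply: Rle_trans (sumI_abs _) _.
  apply: sumI_le => a; rewrite -Rmult_minus_distr_l Rabs_mult.
  by apply: Rmult_le_compat_l; [apply: Rabs_pos | apply: Rlt_le].
have := Rmult_le_compat _ _ _ _ (Rabs_pos D) (Rabs_pos D) D_le D_le.
by rewrite -Rabs_mult Rabs_right; [lra | apply: Rle_ge; apply: Rle_0_sqr].
Qed.

Lemma small_square_bound a b : 0 <= a -> 0 < b -> exists delta, 0 < delta /\ a * (delta * delta) <= b.
Proof.
move=> a_ge0 b_pos; pose delta := Rmin 1 (b / (a + 1)).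
have q_pos : 0 < b / (a + 1) by apply: Rdiv_lt_0_compat; lra.
have delta_pos : 0 < delta by apply: Rmin_glb_lt; lra.
have delta_le1 : delta <= 1 := Rmin_l _ _.
have : (a + 1) * delta <= (a + 1) * (b / (a + 1)) by apply: Rmult_le_compat_l; [lra | apply: Rmin_r].
have -> : (a + 1) * (b / (a + 1)) = b by field; lra.
have : a * (delta * delta) <= a * delta by apply: Rmult_le_compat_l; nra.
by exists delta; split=> //; lra.
Qed.

Lemma coord_bound n (u : vec n) M i : dot u u <= M -> Rabs (u i) <= 1 + M.
Proof.
move=> uM; have : u i * u i <= dot u u.
  by apply: (@sumI_term _ (fun j => u j * u j)) => j; apply: Rle_0_sqr.
by case: (Rcase_abs (u i)) => H; [rewrite Rabs_left | rewrite Rabs_right]; nra.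
Qed.

Lemma up_div_close delta a b : 0 < delta -> up (a / delta) = up (b / delta) -> Rabs (a - b) < delta.
Proof.
move=> delta_pos up_eq.
have [a_lo a_hi] := archimed (a / delta); have [b_lo b_hi] := archimed (b / delta).
rewrite up_eq in a_lo a_hi.
have -> : a - b = delta * (a / delta - b / delta) by field; lra.
have q_lt : Rabs (a / delta - b / delta) < 1 by apply: Rabs_def1; lra.
by rewrite Rabs_mult (Rabs_right delta); [nra | lra].
Qed.

Lemma finite_representatives n (S : vec n -> Prop) (f : vec n -> R) (M delta : R) :
  0 < delta -> (forall u, S u -> dot u u <= M) ->
  exists Y (rep : vec n -> vec n), forall u, S u ->
    [/\ S (rep u), forall i, Rabs (u i - rep u i) < delta & f (rep u) <= Y].
Proof.
move=> delta_pos bounded; pose C := 1 + M.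
have inv_delta : 0 < / delta by apply: Rinv_0_lt_compat.
pose idx (u : vec n) i := up ((u i + C) / delta).
pose N := Z.to_nat (up (2 * C / delta + 1)).
have idx_range u i : S u -> (0 < idx u i)%Z /\ (Z.to_nat (idx u i) < N.+1)%N.
  move=> Su; have := coord_bound i (bounded u Su); rewrite -/C => uC.
  have := Rle_abs (u i); have := Rle_abs (- u i); rewrite Rabs_Ropp => ? ?.
  have lo : 0 <= (u i + C) / delta by apply: Rmult_le_pos; lra.
  have hi : (u i + C) / delta <= 2 * C / delta by apply: Rmult_le_compat_r; lra.
  have [? ?] := archimed ((u i + C) / delta); have [? ?] := archimed (2 * C / delta + 1).
  have : (0 < idx u i)%Z by apply: lt_IZR; rewrite /idx; lra.
  have : (idx u i < up (2 * C / delta + 1))%Z by apply: lt_IZR; rewrite /idx; lra.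
  by move=> ? ?; split=> //; apply/ltP; rewrite /N; lia.
pose cell (u : vec n) : {ffun 'I_n -> 'I_N.+1} := [ffun i => inord (Z.to_nat (idx u i))].
have [rep_of rep_ofP] : exists rep_of : {ffun 'I_n -> 'I_N.+1} -> vec n,
    forall k, (exists u, S u /\ cell u = k) -> S (rep_of k) /\ cell (rep_of k) = k.
  apply: (choice (fun k v => (exists u, S u /\ cell u = k) -> S v /\ cell v = k)) => k.
  have [[u Hu]|none] := classic (exists u, S u /\ cell u = k); first by exists u.
  by exists (fun _ => 0) => Hk; case: none.
exists (\sum_(k : {ffun 'I_n -> 'I_N.+1}) Rabs (f (rep_of k))), (fun u => rep_of (cell u)).
move=> u Su; have [S_rep cell_rep] := rep_ofP _ (ex_intro _ u (conj Su erefl)).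
split=> // [i|].
- have [idx_u_pos idx_u_lt] := idx_range u i Su.
  have [idx_r_pos idx_r_lt] := idx_range _ i S_rep.
  have := congr1 (fun k : {ffun 'I_n -> 'I_N.+1} => nat_of_ord (k i)) cell_rep.
  rewrite /= !ffunE !inordK // => eq_nat.
  have idx_eq : idx u i = idx (rep_of (cell u)) i by lia.
  have := up_div_close delta_pos idx_eq.
  by have -> : u i + C - (rep_of (cell u) i + C) = u i - rep_of (cell u) i by ring.
- apply: Rle_trans (Rle_abs _) _.
  exact: (@big_Rterm _ (fun k => Rabs (f (rep_of k))) (cell u) (fun k => Rabs_pos _)).
Qed.

Section Penalty.
Variables (m n1 n2 K : nat) (A : mat m n1) (B : mat m n2) (d : vec n2) (F : mat m K.+1).
Variable x : vec n1.

(* [Lam = mu E^T] turns the [Lam]-term of the quadratic form into [mu ||E z||^2]. *)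
Definition muEt (mu : R) : mat (K.+1 + m) n2 := fun i l => mu * Emat B d l i.

Definition Qmu (lam mu rho : R) (u : vec K.+1) (w : vec m) : R :=
  lam * (u ord0 * u ord0) - dot w (fun b => mulmv F u b - mulmv A x b * u ord0)
  + mu * dot (Ez B d u w) (Ez B d u w) + rho * (dot u u + dot w w).

Lemma qform_muEt lam mu rho z :
  qform (Mbar A B d F x lam (muEt mu) rho) z =
  Qmu lam mu rho (fun a => z (lshift m a)) (fun b => z (rshift K.+1 b)).
Proof.
rewrite qform_Mbar /Qmu -dot_scale; congr (_ + _ + _); congr (dot _ _).
apply: functional_extensionality => l; rewrite -Emat_mul -sumI_scale.
by apply: sumI_ext => i; rewrite /muEt; ring.
Qed.

Lemma Qmu_scale lam mu rho t u w :
  Qmu lam mu rho (fun a => t * u a) (fun b => t * w b) = t * t * Qmu lam mu rho u w.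
Proof.
have Ez_scale : Ez B d (fun a => t * u a) (fun b => t * w b) = (fun l => t * Ez B d u w l).
  apply: functional_extensionality => l.
  rewrite /Ez (sumI_ext (g := fun b => t * (B b l * w b))) ?sumI_scale => [|b]; ring.
have lin_scale : (fun b => mulmv F (fun a => t * u a) b - mulmv A x b * (t * u ord0))
    = (fun b => t * (mulmv F u b - mulmv A x b * u ord0)).
  apply: functional_extensionality => b.
  by rewrite /mulmv (sumI_ext (g := fun a => t * (F b a * u a))) ?sumI_scale => [|a]; ring.
have dot_scale_r n (a c : vec n) : dot a (fun i => t * c i) = t * dot a c.
  by rewrite /dot -sumI_scale; apply: sumI_ext => i; ring.
rewrite /Qmu Ez_scale lin_scale !dot_scale !dot_scale_r; ring.
Qed.

Lemma Qmu_nonneg_near_scenario u w g yg s eps mu rho :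
  u ord0 = 1 -> (forall b, 0 <= w b) ->
  (forall i, mulmv B yg i >= mulmv F g i - mulmv A x i) -> dot d yg <= s ->
  0 < mu -> 0 < rho -> dot yg yg <= eps * mu ->
  dot (fun b => mulmv F u b - mulmv F g b) (fun b => mulmv F u b - mulmv F g b) <= eps * rho ->
  0 <= Qmu (s + eps / 2) mu rho u w.
Proof.
move=> u0 w_ge0 yg_feas yg_cost mu_pos rho_pos yg_small.
set D := fun b => mulmv F u b - mulmv F g b => D_small.
(* the recourse [yg] of the nearby scenario [g] controls the constraint term *)
have recourse_gap : dot w (fun b => mulmv F g b - mulmv A x b) <= dot (Ez B d u w) yg + s.
  apply: Rle_trans (dot_le_mulmv w_ge0 yg_feas) _.
  rewrite (sumI_ext (g := fun l => Ez B d u w l * yg l + d l * yg l)) => [|l]; last first.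
    by rewrite /Ez u0; ring.
  by rewrite sumI_add -/(dot (Ez B d u w) yg) -/(dot d yg); lra.
have split_w : dot w (fun b => mulmv F u b - mulmv A x b * u ord0) =
    dot w (fun b => mulmv F g b - mulmv A x b) + dot w D.
  by rewrite /dot -sumI_add; apply: sumI_ext => b; rewrite /D u0; ring.
have amgm_E := amgm_dot (Ez B d u w) yg mu_pos.
have amgm_D := amgm_dot w D rho_pos.
have yg_quarter := Rdiv_le_quarter mu_pos yg_small.
have D_quarter := Rdiv_le_quarter rho_pos D_small.
have : 0 <= rho * dot u u by apply: Rmult_le_pos; [lra | apply: dot_ge0].
rewrite /Qmu split_w u0; lra.
Qed.

End Penalty.

Lemma Mbar_sym m n1 n2 K (A : mat m n1) (B : mat m n2) (d : vec n2) (F : mat m K.+1)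
    x lam Lam rho i j :
  Mbar A B d F x lam Lam rho i j = Mbar A B d F x lam Lam rho j i.
Proof.
rewrite /Mbar /g1g1T /Gx eq_sym.
by case: (split i) => a; case: (split j) => b /=; rewrite 1?andbC; ring.
Qed.

(* Otherwise the ray from a point of [U] in direction [v] would stay in the bounded [U]. *)
Lemma Uhat_ord0_eq0 K (Uhat : vec K.+1 -> Prop) :
  vconvex Uhat -> vcone Uhat -> (exists u, Uset Uhat u) -> vbounded (Uset Uhat) ->
  forall v, Uhat v -> v ord0 = 0 -> forall i, v i = 0.
Proof.
move=> convex cone [u0 Uu0] [M bounded] v Uv v0 i; apply: NNPP => vi_ne.
have ray t : 0 <= t -> Uset Uhat (fun a => u0 a + t * v a).
  move=> t_ge0; have U2u : Uhat (vscale 2 u0) by apply: cone; [case: Uu0 | lra].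
  have U2v : Uhat (vscale (2 * t) v) by apply: cone; [| lra].
  have := convex _ _ (/ 2) U2u U2v ltac:(lra).
  have -> : vadd (vscale (/ 2) (vscale 2 u0)) (vscale (1 - / 2) (vscale (2 * t) v)) =
            (fun a => u0 a + t * v a).
    by apply: functional_extensionality => a; rewrite /vadd /vscale; field.
  by move=> Uray; split=> //; case: Uu0 => _ ->; rewrite v0; ring.
have vi_pos : 0 < Rabs (v i) by apply: Rabs_pos_lt.
pose t := (Rabs (u0 i) + Rabs M + 2) / Rabs (v i).
have t_ge0 : 0 <= t.
  apply: Rmult_le_pos; last by apply/Rlt_le/Rinv_0_lt_compat.
  by have := Rabs_pos (u0 i); have := Rabs_pos M; lra.
have ray_bound := coord_bound i (bounded _ (ray t t_ge0)).
have tv : Rabs (t * v i) = Rabs (u0 i) + Rabs M + 2.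
  by rewrite Rabs_mult (Rabs_right t); [rewrite /t; field; lra | lra].
have : Rabs (t * v i) <= Rabs (u0 i + t * v i) + Rabs (u0 i).
  rewrite -(Rabs_Ropp (u0 i)); apply: Rle_trans (Rabs_triang _ _).
  by right; congr Rabs; ring.
by have := Rle_abs M; lra.
Qed.

Lemma COP_muEt m n1 n2 K (A : mat m n1) (B : mat m n2) (d : vec n2) (F : mat m K.+1)
    (x : vec n1) (Uhat : vec K.+1 -> Prop) lam mu rho :
  vconvex Uhat -> vcone Uhat -> (forall u, Uhat u -> 0 <= u ord0) ->
  (exists u, Uset Uhat u) -> vbounded (Uset Uhat) -> 0 <= mu -> 0 <= rho ->
  (forall u w, Uset Uhat u -> (forall b, 0 <= w b) -> 0 <= Qmu A B d F x lam mu rho u w) ->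
  COP Uhat (Mbar A B d F x lam (muEt B d mu) rho).
Proof.
move=> convex cone first_ge0 U_ne U_bnd mu_ge0 rho_ge0 Q_U.
split=> [i j|z [Uu z_ge0]]; first exact: Mbar_sym.
rewrite qform_muEt; set u := fun a => z (lshift m a) in Uu *.
set w := fun b => z (rshift K.+1 b); have w_ge0 b : 0 <= w b := z_ge0 b.
clearbody u w.
case: (Rle_lt_or_eq_dec 0 (u ord0) (first_ge0 _ Uu)) => [u0_pos|u0_eq0].
  (* homogeneity reduces to the slice [u_1 = 1] *)
  pose t := u ord0; have inv_t : 0 < / t by apply: Rinv_0_lt_compat.
  have -> : u = (fun a => t * (/ t * u a)).
    by apply: functional_extensionality => a; field; apply: Rgt_not_eq.
  have -> : w = (fun b => t * (/ t * w b)).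
    by apply: functional_extensionality => b; field; apply: Rgt_not_eq.
  rewrite Qmu_scale; apply: Rmult_le_pos; first by apply: Rle_0_sqr.
  apply: Q_U => [|b]; last by apply: Rmult_le_pos; [lra | apply: w_ge0].
  split; first by apply: (cone _ (/ t)); [ | lra].
  by rewrite /t; field; apply: Rgt_not_eq.
have -> : u = (fun _ => 0).
  by apply: functional_extensionality; apply: (Uhat_ord0_eq0 convex cone U_ne U_bnd Uu).
rewrite /Qmu.
have -> : dot w (fun b => mulmv F (fun _ => 0) b - mulmv A x b * 0) = 0.
  by apply: sumI_zero => b; rewrite /mulmv sumI_zero => [|a]; ring.
have -> : dot (fun _ : 'I_K.+1 => 0) (fun _ => 0) = 0 by apply: sumI_zero => a; ring.
have := Rmult_le_pos _ _ mu_ge0 (dot_ge0 (Ez B d (fun _ : 'I_K.+1 => 0) w)).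
have := Rmult_le_pos _ _ rho_ge0 (dot_ge0 w).
by move=> ? ?; lra.
Qed.

Section Approximation.
Variables (m n1 n2 K : nat) (A : mat m n1) (B : mat m n2) (c : vec n1) (d : vec n2).
Variables (F : mat m K.+1) (X : vec n1 -> Prop) (Uhat : vec K.+1 -> Prop) (r : R).
Hypotheses (convex : vconvex Uhat) (cone : vcone Uhat) (first_ge0 : forall u, Uhat u -> 0 <= u ord0).
Hypotheses (U_nonempty : exists u, Uset Uhat u) (U_bounded : vbounded (Uset Uhat)) (r_pos : 0 < r).

Lemma RLPbar_approximates_RLP t eps :
  RLP_values A B c d F X Uhat t -> 0 < eps ->
  exists t', RLPbar_values A B c d F X Uhat r t' /\ t' <= t + eps.
Proof.
move=> [x [y [s [[Xx y_feas] [[s_ub _] ->]]]]] eps_pos.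
have y_cost g : Uset Uhat g -> dot d (y g) <= s by move=> Ug; apply: s_ub; exists g.
pose rho := eps / (4 * r).
have rho_pos : 0 < rho by apply: Rdiv_lt_0_compat; lra.
pose FS := sumI (fun b => sumI (fun a => Rabs (F b a)) * sumI (fun a => Rabs (F b a))).
have FS_ge0 : 0 <= FS by apply: sumI_ge0 => b; apply: Rle_0_sqr.
have [delta [delta_pos FS_delta]] := small_square_bound FS_ge0 (Rmult_lt_0_compat _ _ eps_pos rho_pos).
have [M bounded] := U_bounded.
have [Y [rep rep_spec]] := finite_representatives (fun g => dot (y g) (y g)) delta_pos bounded.
pose mu := (Rabs Y + 1) / eps.
have mu_pos : 0 < mu by apply: Rdiv_lt_0_compat; [have := Rabs_pos Y; lra | lra].
have Y_le : Y <= eps * mu.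
  by rewrite /mu /Rdiv Rmult_comm Rmult_assoc Rinv_l; [have := Rle_abs Y; lra | lra].
have cop : COP Uhat (Mbar A B d F x (s + eps / 2) (muEt B d mu) rho).
  apply: COP_muEt => //; try lra.
  move=> u w [Uu u0] w_ge0; have [Ug close yg_le] := rep_spec u (conj Uu u0).
  apply: (Qmu_nonneg_near_scenario (g := rep u) (yg := y (rep u))) => //.
  - by move=> i; have := y_feas _ Ug i; lra.
  - exact: y_cost.
  - lra.
  - exact: Rle_trans (dot_mulmv_close F close) FS_delta.
exists (dot c x + (s + eps / 2) + r * rho); split.
  by exists x, (s + eps / 2), (muEt B d mu), rho; repeat split=> //; lra.
have : r * rho = eps / 4 by rewrite /rho; field; lra.
by move=> ?; lra.
Qed.

End Approximation.

Theorem theorem1 (m n1 n2 K : nat)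
  (A : mat m n1) (B : mat m n2) (c : vec n1) (d : vec n2) (F : mat m K.+1)
  (X : vec n1 -> Prop) (Uhat : vec K.+1 -> Prop)
  (HXc : vclosed X) (HXv : vconvex X)
  (HUc : vclosed Uhat) (HUv : vconvex Uhat) (HUk : vcone Uhat)
  (HUf : vfull_dim Uhat) (HUp : forall u, Uhat u -> 0 <= u ord0)
  (HUne : exists u, Uset Uhat u) (HUcp : vcompact (Uset Uhat))
  (HA2 : exists x y, RLP_feasible A B F X Uhat x y)
  (v : R) (HA3 : is_glb (RLP_values A B c d F X Uhat) v)
  (HA4 : forall x u, X x -> Uset Uhat u ->
         exists y : vec n2, forall i, mulmv B y i >= mulmv F u i - mulmv A x i)
  (r : R) (Hr : 0 < r)
  (Hbound : forall u w, Uset Uhat u -> extreme_point (Wset B d) w ->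
            dot u u + dot w w <= r) :
  is_glb (RLPbar_values A B c d F X Uhat r) v.
Proof.
have [v_lb v_greatest] := HA3.
split.
- move=> t [x [lam [Lam [rho [Xx [cop [rho_ge0 ->]]]]]]].
  have [t' [RLP_t' le_t']] := RLPbar_dominates_RLP c HUne HA4 Hbound Xx cop rho_ge0.
  by have v_le := v_lb _ RLP_t'; lra.
- move=> v' v'_lb; apply: v_greatest => t RLP_t; apply: Rle_plus_epsilon => eps eps_pos.
  have [t' [bar_t' le_t']] :=
    RLPbar_approximates_RLP HUv HUk HUp HUne (proj2 HUcp) Hr RLP_t eps_pos.
  by have v'_le := v'_lb _ bar_t'; lra.
Qed.
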